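(* Let $(\Omega,\mathcal{F},\mathbb{P})$ be a nonatomic probability space and $(\Phi,\Psi)$ an Orlicz pair as in the context. For every $X\in L^\Phi$ there exists a sequence $(\pi_n)\subset\Pi$ such that $\mathbb{E}[X|\pi_n]$ order converges to $X$ in $L^\Phi$; that is, $\mathbb{E}[X|\pi_n]\to X$ a.s. and there is $Z\in L^\Phi$ with $|\mathbb{E}[X|\pi_n]|\le Z$ for all $n$.
   Context: $(\Omega,\mathcal{F},\mathbb{P})$ is a nonatomic probability space. An Orlicz function is a convex, increasing $\Phi:[0,\infty)\to[0,\infty)$ with $\Phi(0)=0$; its conjugate is $\Psi(s)=\sup_{t\ge0}(ts-\Phi(t))$. Standing assumption: $\Phi(t)>0$ for $t>0$ and $\lim_{t\to\infty}\Phi(t)/t=\infty$. $L^\Phi$ is the space of random variables $X$ (mod a.s. equality) with $\|X\|_\Phi:=\inf\{\lambda>0:\mathbb{E}[\Phi(|X|/\lambda)]\le 1\}<\infty$. $\Pi$ denotes the set of all finite measurable partitions of $\Omega$ whose members all have nonzero probability; $\mathbb{E}[X|\pi]:=\mathbb{E}[X|\sigma(\pi)]$. For sequences in $L^\Phi$, order convergence $X_n\to X$ is equivalent to a.s. convergence together with domination $|X_n|\le Z$ for some $Z\in L^\Phi$. *)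

From HB Require Import structures.
From mathcomp Require Import all_boot all_order all_algebra.
From mathcomp Require Import all_classical all_reals all_analysis.
Set Implicit Arguments. Unset Strict Implicit. Unset Printing Implicit Defensive.
Import Order.TTheory GRing.Theory Num.Theory.
Import numFieldNormedType.Exports.
Local Open Scope classical_set_scope.
Local Open Scope ring_scope.

Section Defs.
Context {d : measure_display} {T : measurableType d} {R : realType}.

Definition nonatomic (P : probability T R) : Prop :=
  forall A : set T, measurable A -> (0 < P A)%E ->
    exists B : set T, [/\ measurable B, B `<=` A, (0 < P B)%E & (P B < P A)%E].

(* Orlicz function (only its values on [0,oo) matter), together with the
   standing assumptions Phi(t)>0 for t>0 and Phi(t)/t -> oo. *)
Definition orlicz_function (Phi : R -> R) : Prop :=
  [/\ Phi 0 = 0,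
      (forall s t (l : R), 0 <= s -> 0 <= t -> 0 <= l <= 1 ->
         Phi (l * s + (1 - l) * t) <= l * Phi s + (1 - l) * Phi t),
      (forall s t, 0 <= s -> s <= t -> Phi s <= Phi t),
      (forall t, 0 < t -> 0 < Phi t) &
      (forall M : R, exists t0 : R, forall t, t0 <= t -> 0 < t -> M <= Phi t / t)].

(* X belongs to L^Phi: X is measurable and ||X||_Phi < oo, i.e. the set
   {lambda > 0 | E[Phi(|X|/lambda)] <= 1} is nonempty. *)
Definition in_LPhi (P : probability T R) (Phi : R -> R) (X : T -> R) : Prop :=
  measurable_fun setT X /\
  exists lam : R, 0 < lam /\
    (\int[P]_x (Phi (`|X x| / lam))%:E <= 1)%E.

Record fin_family := FinFamily { ff_card : nat; ff_block : 'I_ff_card -> set T }.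

Definition in_Pi (P : probability T R) (q : fin_family) : Prop :=
  [/\ (forall i, measurable (@ff_block q i)),
      (forall i, (0 < P (@ff_block q i))%E),
      (forall i j, i != j -> @ff_block q i `&` @ff_block q j = set0) &
      (forall x : T, exists i, @ff_block q i x)].

Definition cond_exp_part (P : probability T R) (q : fin_family) (X : T -> R)
  : T -> R :=
  fun x => \sum_(i < ff_card q)
     (Rintegral P (@ff_block q i) X / fine (P (@ff_block q i)))
       * \1_(@ff_block q i) x.

End Defs.

From mathcomp Require Import all_boot all_order all_algebra.
From mathcomp Require Import all_classical all_reals all_analysis.
From mathcomp Require Import measurable_realfun ring lra zify.
Set Implicit Arguments. Unset Strict Implicit. Unset Printing Implicit Defensive.
Import Order.TTheory GRing.Theory Num.Theory.
Import numFieldNormedType.Exports.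
Local Open Scope classical_set_scope.
Local Open Scope ring_scope.

(* Let pi_n consist of the dyadic levels {k 2^-n <= X < (k + 1) 2^-n} with
   |k| < M_n 2^n and positive probability, except that the level C_n of a fixed
   point x0 (generic: all its levels have positive probability) is merged with
   everything else, the tail {|X| >= M_n} included, into one remainder block.
   On a kept level E[X | pi_n] is 2^-n-close to X. Choosing M_n with
   E[|X|; |X| >= M_n] <= 2^-n P(C_n), the average of X on the remainder is
   (2 + |X x0|) 2^-n-close to X x0. Hence |E[X | pi_n]| <= |X| + 2 |X x0| + 3,
   which lies in L^Phi, and E[X | pi_n] -> X outside the null set of points
   lying in a null dyadic level. *)

Section average.
Context d (T : measurableType d) (R : realType) (P : probability T R).
Implicit Types (A : set T) (X : T -> R).

Definition average A X : R := Rintegral P A X / fine (P A).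

Lemma fine_probability_gt0 A : measurable A -> (0 < P A)%E -> 0 < fine (P A).
Proof. by move=> mA PA; rewrite fine_gt0 // PA -ge0_fin_numE ?fin_num_measure. Qed.

Lemma dist_average_le X A a r : measurable A -> (0 < P A)%E ->
  P.-integrable setT (EFin \o X) ->
  (\int[P]_(y in A) `|X y - a|%:E <= (r * fine (P A))%:E)%E ->
  `|average A X - a| <= r.
Proof.
move=> mA PA iX intA; have p0 := fine_probability_gt0 mA PA.
have iXA : P.-integrable A (EFin \o X) := integrableS measurableT mA (subsetT A) iX.
have iA : P.-integrable A (EFin \o cst a) := finite_measure_integrable_cst P a mA.
have iXa : P.-integrable A (EFin \o (fun y => X y - a)).
  by apply: eq_integrable (integrableB mA iXA iA) => // y _ /=; rewrite EFinB.
have -> : average A X - a = Rintegral P A (fun y => X y - a) / fine (P A).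
  by rewrite RintegralB // Rintegral_cst // mulrBl mulfK // gt_eqF.
rewrite normrM normfV (gtr0_norm p0) ler_pdivrMr //.
apply: le_trans (le_normr_Rintegral mA iXa) _.
rewrite -lee_fin /Rintegral fineK //.
exact: (integrable_fin_num mA (integrable_norm iXa)).
Qed.

Lemma integral_dist_le X A a r : measurable A -> measurable_fun setT X ->
  (forall y, A y -> `|X y - a| <= r) ->
  (\int[P]_(y in A) `|X y - a|%:E <= (r * fine (P A))%:E)%E.
Proof.
move=> mA mX close; rewrite EFinM fineK ?fin_num_measure // -integral_cst //.
apply: ge0_le_integral => //; apply/measurable_EFinP; apply: measurableT_comp => //.
by apply: measurable_funB; [exact: measurable_funS mX|exact: measurable_cst].
Qed.

Lemma dist_average_le_of_bound X A a r : measurable A -> (0 < P A)%E ->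
  measurable_fun setT X -> P.-integrable setT (EFin \o X) ->
  (forall y, A y -> `|X y - a| <= r) -> `|average A X - a| <= r.
Proof.
by move=> mA PA mX iX close; apply: dist_average_le => //; exact: integral_dist_le.
Qed.

Lemma null_set_not_full A : P A = 0%E -> exists x, ~ A x.
Proof.
move=> PA0; apply: contrapT => /forallNP notA.
have AT : A = setT by apply/seteqP; split => // x _; exact: contrapT (notA x).
by move: PA0; rewrite AT (_ : P setT = 1%E) ?probability_setT // => /eqP; rewrite onee_eq0.
Qed.

Lemma probability_integral_affine (h : T -> R) (a b : R) : 0 <= a -> 0 <= b ->
  measurable_fun setT h -> (forall x, 0 <= h x) ->
  (\int[P]_x (a + b * h x)%:E = a%:E + b%:E * \int[P]_x (h x)%:E)%E.
Proof.
move=> a0 b0 mh h0.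
under eq_integral do rewrite EFinD.
rewrite ge0_integralD //; last first.
- by apply/measurable_EFinP; apply: measurable_funM => //; exact: measurable_cst.
- by move=> x _; rewrite lee_fin mulr_ge0.
rewrite (integral_cst P measurableT a%:E); congr (_ + _)%E.
  by rewrite -[RHS]mule1; congr (_ * _)%E; exact: probability_setT.
under eq_integral do rewrite EFinM.
rewrite ge0_integralZl_EFin //; first by move=> x _; rewrite lee_fin.
exact/measurable_EFinP.
Qed.

End average.

Lemma cond_exp_part_block d (T : measurableType d) (R : realType)
    (P : probability T R) (q : fin_family) (X : T -> R) x (j : 'I_(ff_card q)) :
  (forall i, i != j -> ~ ff_block i x) -> ff_block j x ->
  cond_exp_part P q X x = average P (ff_block j) X.
Proof.
move=> notin_i in_j; rewrite /cond_exp_part (bigD1 j) //= big1 ?addr0.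
  by rewrite indicE mem_set // mulr1.
by move=> i ij; rewrite indicE memNset ?mulr0 //; exact: notin_i.
Qed.

Section orlicz.
Variables (R : realType) (Phi : R -> R).
Hypothesis oPhi : orlicz_function Phi.

Lemma orlicz_ge0 t : 0 <= t -> 0 <= Phi t.
Proof. by case: oPhi => Phi0 _ Phi_mono _ _ t0; rewrite -Phi0 Phi_mono. Qed.

Lemma measurable_orlicz_norm d (T : measurableType d) (X : T -> R) (l : R) :
  0 <= l -> measurable_fun setT X -> measurable_fun setT (fun x => Phi (`|X x| / l)).
Proof.
case: oPhi => _ _ Phi_mono _ _ l_ge0 mX.
have mPhi : measurable_fun setT (fun t : R => Phi (Num.max t 0)).
  apply: nondecreasing_measurable => // s t st; apply: Phi_mono.
    by rewrite le_max lexx orbT.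
  by rewrite ge_max !le_max st lexx orbT.
have -> : (fun x => Phi (`|X x| / l)) =
    (fun t : R => Phi (Num.max t 0)) \o (fun x => `|X x| / l).
  by apply: funext => x /=; rewrite max_l // divr_ge0.
apply: measurableT_comp mPhi _; apply: measurable_funM => //; exact: measurableT_comp.
Qed.

Lemma orlicz_dominates_id : exists t0, 0 <= t0 /\ forall t, 0 <= t -> t <= t0 + Phi t.
Proof.
case: oPhi => _ _ _ _ /(_ 1) [t0 Ht0]; exists `|t0|; split => // t t_ge0.
have [t0t|tt0] := leP t0 t; last first.
  by rewrite (le_trans (ltW tt0)) // (le_trans (ler_norm _)) // lerDl orlicz_ge0.
have [->|t_neq0] := eqVneq t 0; first by rewrite addr_ge0 // orlicz_ge0.
have t_gt0 : 0 < t by rewrite lt0r t_neq0.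
have := Ht0 t t0t t_gt0; rewrite ler_pdivlMr // mul1r => tPhi.
by rewrite (le_trans tPhi) // lerDr.
Qed.

Lemma orlicz_le1 : exists t1, 0 < t1 /\ Phi t1 <= 1.
Proof.
case: oPhi => Phi0 Phi_convex _ Phi_pos _.
have Phi1_gt0 : 0 < Phi 1 := Phi_pos 1 ltr01.
exists (1 + Phi 1)^-1; split; first by rewrite invr_gt0 addr_gt0.
have t1_le1 : (1 + Phi 1)^-1 <= 1 by rewrite invf_le1 ?addr_gt0 // lerDl ltW.
have := Phi_convex 1 0 (1 + Phi 1)^-1 ler01 (lexx 0).
rewrite t1_le1 invr_ge0 addr_ge0 ?(ltW Phi1_gt0) // => /(_ isT).
rewrite mulr1 mulr0 addr0 Phi0 mulr0 addr0 => /le_trans; apply.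
by rewrite mulrC ler_pdivrMr ?addr_gt0 // mul1r lerDr.
Qed.

Lemma orlicz_midpoint u v : 0 <= u -> 0 <= v ->
  Phi (2^-1 * u + 2^-1 * v) <= 2^-1 * Phi u + 2^-1 * Phi v.
Proof.
case: oPhi => _ Phi_convex _ _ _ u0 v0.
have half : 1 - 2^-1 = 2^-1 :> R by field.
have := Phi_convex u v 2^-1 u0 v0; rewrite half; apply.
by rewrite invr_ge0 ler0n invf_le1 ?ler1n.
Qed.

End orlicz.

Section orlicz_space.
Context d (T : measurableType d) (R : realType) (P : probability T R).
Variable Phi : R -> R.
Hypothesis oPhi : orlicz_function Phi.

Lemma in_LPhi_integrable X : in_LPhi P Phi X -> P.-integrable setT (EFin \o X).
Proof.
case=> mX [lam [lam_gt0 intPhi]]; have [t0 [t0_ge0 id_le]] := orlicz_dominates_id oPhi.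
have nX_ge0 x : 0 <= `|X x| / lam by rewrite divr_ge0 // ltW.
have mPhiX := measurable_orlicz_norm oPhi (ltW lam_gt0) mX.
apply/integrableP; split; first exact/measurable_EFinP.
apply: (@le_lt_trans _ _ (\int[P]_x (lam * t0 + lam * Phi (`|X x| / lam))%:E)%E).
  apply: ge0_le_integral => //.
  - by apply: measurableT_comp => //; exact/measurable_EFinP.
  - apply/measurable_EFinP; apply: measurable_funD; first exact: measurable_cst.
    by apply: measurable_funM => //; exact: measurable_cst.
  - move=> x _ /=; rewrite lee_fin -mulrDr.
    rewrite [X in X <= _](_ : _ = lam * (`|X x| / lam)); last first.
      by rewrite mulrCA divff ?mulr1 ?gt_eqF.
    by apply: ler_wpM2l; [exact: ltW|exact: id_le].
rewrite probability_integral_affine ?(mulr_ge0 (ltW lam_gt0) t0_ge0) ?(ltW lam_gt0) //;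
  last by move=> x; rewrite orlicz_ge0.
rewrite (@le_lt_trans _ _ (lam * t0 + lam)%:E) ?ltey // EFinD leeD2l //.
rewrite -[in leRHS](mule1 lam%:E).
by rewrite lee_wpmul2l // lee_fin ltW.
Qed.

(* For Phi t1 <= 1 the parameter lam = 2 lam0 + 2 c / t1 works: (|X| + c) / lam is
   the midpoint of 2 |X| / lam <= |X| / lam0 and 2 c / lam <= t1. *)
Lemma in_LPhi_normD_cst X c : in_LPhi P Phi X -> 0 <= c ->
  in_LPhi P Phi (fun x => `|X x| + c).
Proof.
case=> mX [lam0 [lam0_gt0 intPhi]] c_ge0.
have [t1 [t1_gt0 Phit1_le1]] := orlicz_le1 oPhi.
have [_ _ Phi_mono _ _] := oPhi.
pose lam := 2 * lam0 + 2 * c / t1.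
have lam_gt0 : 0 < lam by rewrite ltr_pwDl ?mulr_gt0 // divr_ge0 ?mulr_ge0 // ltW.
have pointwise y : 0 <= y -> Phi ((y + c) / lam) <= 2^-1 + 2^-1 * Phi (y / lam0).
  move=> y_ge0; have -> : (y + c) / lam = 2^-1 * (2 * y / lam) + 2^-1 * (2 * c / lam).
    by field; rewrite gt_eqF.
  have lam_ge0 := ltW lam_gt0.
  apply: le_trans (orlicz_midpoint oPhi _ _) _; rewrite ?divr_ge0 ?mulr_ge0 //.
  rewrite addrC; apply: lerD.
    rewrite -[leRHS]mulr1 ler_pM2l ?invr_gt0 //; apply: le_trans Phit1_le1.
    apply: Phi_mono; first by rewrite divr_ge0 ?mulr_ge0.
    rewrite ler_pdivrMr // /lam mulrDr [t1 * (2 * c / t1)]mulrC divfK ?gt_eqF //.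
    by rewrite lerDr mulr_ge0 ?mulr_ge0 ?(ltW t1_gt0) ?(ltW lam0_gt0).
  rewrite ler_pM2l ?invr_gt0 //; apply: Phi_mono; first by rewrite divr_ge0 ?mulr_ge0.
  rewrite ler_pdivrMr // /lam mulrDr.
  have -> : y / lam0 * (2 * lam0) = 2 * y by field; rewrite gt_eqF.
  by rewrite lerDl mulr_ge0 ?divr_ge0 ?mulr_ge0 ?(ltW t1_gt0) ?(ltW lam0_gt0).
have mZ : measurable_fun setT (fun x => `|X x| + c).
  by apply: measurable_funD; [exact: measurableT_comp|exact: measurable_cst].
have mPhiX := measurable_orlicz_norm oPhi (ltW lam0_gt0) mX.
split => //; exists lam; split => //.
apply: (@le_trans _ _ (\int[P]_x (2^-1 + 2^-1 * Phi (`|X x| / lam0))%:E)%E).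
  apply: ge0_le_integral => //.
  - by move=> x _; rewrite lee_fin orlicz_ge0 // divr_ge0 // ltW.
  - exact/measurable_EFinP/(measurable_orlicz_norm oPhi (ltW lam_gt0) mZ).
  - apply/measurable_EFinP; apply: measurable_funD; first exact: measurable_cst.
    by apply: measurable_funM => //; exact: measurable_cst.
  - by move=> x _; rewrite lee_fin ger0_norm ?addr_ge0 // pointwise.
rewrite probability_integral_affine ?invr_ge0 //; last first.
  by move=> x; rewrite orlicz_ge0 // divr_ge0 // ltW.
rewrite (@le_trans _ _ (2^-1 + 2^-1 * 1)%:E) //; last by rewrite lee_fin mulr1; lra.
by rewrite EFinD leeD2l // EFinM lee_wpmul2l // lee_fin invr_ge0.
Qed.

End orlicz_space.

Section tail.
Context d (T : measurableType d) (R : realType) (P : probability T R) (X : T -> R).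
Hypothesis mX : measurable_fun setT X.

Let mnX : measurable_fun setT (fun y => `|X y|%:E).
Proof. by apply/measurable_EFinP; exact: measurableT_comp. Qed.

Lemma measurable_norm_ge (c : R) : measurable [set y | c <= `|X y|].
Proof.
have := measurableT_comp (@normr_measurable R setT) mX measurableT (measurable_itv `[c, +oo[).
by rewrite setTI; congr measurable; apply/seteqP; split => y /=; rewrite in_itv /= andbT.
Qed.

Lemma integral_tail_small (eps : R) : P.-integrable setT (EFin \o X) -> 0 < eps ->
  exists m0 : nat, forall m : nat, (m0 <= m)%N ->
    (\int[P]_(y in [set y | (m%:R <= `|X y|)%R]) `|X y|%:E <= eps%:E)%E.
Proof.
move=> iX eps_gt0.
pose f (m : nat) := (fun y => `|X y|%:E) \_ [set y | m%:R <= `|X y|].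
have mf m : measurable_fun setT (f m).
  apply/(measurable_restrictT _ _).1; first exact: measurable_norm_ge.
  exact: measurable_funS mnX.
have f_cvg0 : {ae P, forall x, setT x -> f ^~ x @ \oo --> cst 0%E x}.
  apply: aeW => x _; apply: cvg_near_cst; near=> m.
  rewrite /f /patch memNset //=; apply/negP; rewrite -ltNge.
  by near: m; exact: nbhs_infty_gtr.
have f_le y m : setT y -> (`|f m y| <= `|X y|%:E)%E.
  by rewrite /f /patch; case: ifP => _ /= _; rewrite ?normr_id ?normr0 ?lee_fin.
have [_ _] := dominated_convergence measurableT mf (measurable_cst _) f_cvg0
  (integrable_norm iX) (aeW _ (fun y m => f_le y m)).
rewrite integral0 => /fine_cvgP[f_fin /cvgrPdist_le/(_ eps eps_gt0) f_small].
have [m0 _ Hm0] : \forall m \near \oo, (\int[P]_x f m x <= eps%:E)%E.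
  apply: filterS2 f_fin f_small => m /= fin_m; rewrite sub0r normrN -(fineK fin_m) lee_fin.
  exact: le_trans (ler_norm _).
by exists m0 => m m0m; rewrite integral_mkcond; exact: Hm0.
Unshelve. all: end_near.
Qed.

(* On the tail |a| <= |a| |X|, since |X| >= M >= 1 there. *)
Lemma integral_tail_dist_le (M a r : R) : 1 <= M ->
  (\int[P]_(y in [set y | (M <= `|X y|)%R]) `|X y|%:E <= r%:E)%E ->
  (\int[P]_(y in [set y | (M <= `|X y|)%R]) `|X y - a|%:E <= ((1 + `|a|) * r)%:E)%E.
Proof.
set A := [set y | M <= `|X y|] => M_ge1 intX_le.
have mA : measurable A := measurable_norm_ge M.
have mnXA : measurable_fun A (fun y => `|X y|%:E) :=
  measurable_funS measurableT (subsetT A) mnX.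
have PA_le : (P A <= r%:E)%E.
  apply: le_trans intX_le; rewrite -[leLHS]mul1e -integral_cst //.
  apply: ge0_le_integral => //.
  by move=> y Ay; rewrite lee_fin (le_trans M_ge1).
apply: (@le_trans _ _ (\int[P]_(y in A) (`|X y|%:E + `|a|%:E))%E).
  apply: ge0_le_integral => //.
  - apply/measurable_EFinP; apply: measurableT_comp => //.
    by apply: measurable_funB; [exact: measurable_funS mX|exact: measurable_cst].
  - by apply: emeasurable_funD => //; exact: measurable_cst.
  - by move=> y _; rewrite -EFinD lee_fin ler_normB.
rewrite ge0_integralD // integral_cst // mulrDl mul1r EFinD EFinM.
by apply: leeD => //; apply: lee_wpmul2l; rewrite ?lee_fin.
Qed.

End tail.

Section level_partition.
Context d (T : measurableType d) (R : realType) (P : probability T R).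
Variables (I : eqType) (f : T -> I) (s : seq I).
Hypothesis mf : forall k, measurable [set x | f x = k].

(* Block i < size s is the level set of the i-th value of s; block size s, where
   index returns size s, collects the points whose value is not in s. *)
Definition level_partition : fin_family :=
  @FinFamily d T (size s).+1 (fun i => [set x | index (f x) s = i]).

Lemma measurable_index_level i : measurable [set x | index (f x) s = i].
Proof.
elim: s i => [|k s' IH] i.
  have [->|i_neq0] := eqVneq i 0%N.
    by rewrite (_ : [set _ | _] = setT) //; apply/seteqP; split.
  rewrite (_ : [set _ | _] = set0) //; apply/seteqP; split => x //=.
  by move/esym/eqP; rewrite (negPf i_neq0).
case: i => [|i].
  rewrite (_ : [set _ | _] = [set x | f x = k]) //.
  by apply/seteqP; split => x /=; [case: eqP|move=> ->; rewrite eqxx].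
rewrite (_ : [set _ | _] = ~` [set x | f x = k] `&` [set x | index (f x) s' = i]).
  exact: measurableI (measurableC (mf k)) (IH i).
apply/seteqP; split => x /=; first by case: eqP => // /nesym fxk [].
by move=> [fxk idx]; case: eqP => [kfx|_]; [move/esym/fxk: kfx|rewrite idx].
Qed.

Lemma index_eq_size : [set x | index (f x) s = size s] = [set x | f x \notin s].
Proof.
apply/seteqP; split => x /=; last exact: memNindex.
by move=> idx; rewrite -index_mem idx ltnn.
Qed.

Lemma measurable_level_notin : measurable [set x | f x \notin s].
Proof. by rewrite -index_eq_size; exact: measurable_index_level. Qed.

Lemma level_partition_Pi : uniq s -> (forall k, k \in s -> (0 < P [set x | f x = k])%E) ->
  (0 < P [set x | f x \notin s])%E -> in_Pi P level_partition.
Proof.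
move=> s_uniq level_gt0 rest_gt0; split => /=.
- by move=> i; exact: measurable_index_level.
- move=> [i /=]; rewrite ltnS leq_eqVlt => /orP[/eqP ->|i_lt].
    by rewrite index_eq_size.
  have [k ks <-] : exists2 k, k \in s & index k s = i.
    case: s i_lt s_uniq => // k0 s' i_lt s_uniq.
    by exists (nth k0 (k0 :: s') i); [exact: mem_nth|exact: index_uniq].
  apply: lt_le_trans (level_gt0 k ks) _; apply: le_measure; rewrite ?inE //.
  - exact: measurable_index_level.
  - by move=> x /= ->.
- move=> i j ij; apply/seteqP; split => x // [/= xi xj].
  by move/eqP: ij; apply; apply: val_inj; rewrite /= -xi -xj.
- by move=> x; exists (Ordinal (index_size (f x) s : (_ < (size s).+1)%N)).
Qed.

Lemma cond_exp_level_partition (X : T -> R) x :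
  cond_exp_part P level_partition X x =
    average P [set y | index (f y) s = index (f x) s] X.
Proof.
apply: (@cond_exp_part_block _ _ _ P level_partition X x
  (Ordinal (index_size (f x) s : (_ < (size s).+1)%N))) => //.
by move=> i ij xi; move/eqP: ij; apply; apply: val_inj.
Qed.

Lemma index_level_mem x : f x \in s ->
  [set y | index (f y) s = index (f x) s] = [set y | f y = f x].
Proof.
move=> fx_s; apply/seteqP; split => y /=; last by move->.
move=> idx; have fy_s : f y \in s by rewrite -index_mem idx index_mem.
by rewrite -(nth_index (f x) fy_s) idx nth_index.
Qed.

Lemma index_level_notin x : f x \notin s ->
  [set y | index (f y) s = index (f x) s] = [set y | f y \notin s].
Proof. by move=> fx_s; rewrite (memNindex fx_s) index_eq_size. Qed.

End level_partition.

Definition int_range (N : nat) : seq int := [seq i%:Z - N%:Z | i <- iota 0 (2 * N)].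

Lemma int_range_uniq N : uniq (int_range N).
Proof. by rewrite map_inj_uniq ?iota_uniq // => a b /addIr []. Qed.

Lemma mem_int_range N (k : int) : (- N%:Z <= k < N%:Z) -> k \in int_range N.
Proof.
move=> /andP[k_ge k_lt]; apply/mapP; exists (absz (k + N%:Z)); last by lia.
by rewrite mem_iota /=; lia.
Qed.

Section dyadic_level.
Context d (T : measurableType d) (R : realType) (X : T -> R).

Definition dyadic_level (n : nat) (x : T) : int := Num.floor (X x * 2 ^+ n).

Lemma measurable_dyadic_level n k : measurable_fun setT X ->
  measurable [set x | dyadic_level n x = k].
Proof.
move=> mX; have mXn : measurable_fun setT (fun x => X x * 2 ^+ n).
  by apply: measurable_funM => //; exact: measurable_cst.
rewrite (_ : [set _ | _] = setT `&` (fun x => X x * 2 ^+ n) @^-1` `[k%:~R, (k + 1)%:~R[).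
  exact: mXn measurableT _ (measurable_itv _).
rewrite setTI; apply/seteqP; split => y /=; rewrite in_itv /=.
  by rewrite /dyadic_level => <-; exact: floor_itv.
by move=> y_itv; apply/eqP; rewrite floor_eq.
Qed.

Lemma dyadic_level_dist n x y : dyadic_level n x = dyadic_level n y ->
  `|X y - X x| <= 2 ^- n.
Proof.
move=> same_level; have pow_gt0 : 0 < 2 ^+ n :> R by rewrite exprn_gt0.
have /andP[x_ge x_lt] := floor_itv (X x * 2 ^+ n).
have /andP[y_ge y_lt] := floor_itv (X y * 2 ^+ n).
rewrite -/(dyadic_level n x) -/(dyadic_level n y) same_level intrD in x_ge x_lt y_ge y_lt.
have : `|X y * 2 ^+ n - X x * 2 ^+ n| <= 1 by rewrite ler_norml; apply/andP; split; lra.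
by rewrite -mulrBl normrM (gtr0_norm pow_gt0) -[2 ^- n]mul1r ler_pdivlMr.
Qed.

Lemma dyadic_level_range n (M : nat) x : `|X x| < M%:R ->
  dyadic_level n x \in int_range (M * 2 ^ n)%N.
Proof.
move=> X_lt; have pow_gt0 : 0 < 2 ^+ n :> R by rewrite exprn_gt0.
have MnE : ((M * 2 ^ n)%N%:Z)%:~R = M%:R * 2 ^+ n :> R by rewrite -natrX -natrM.
apply: mem_int_range; rewrite /dyadic_level floor_ge_int floor_lt_int intrN MnE.
move: X_lt; rewrite ltr_norml => /andP[X_gt X_lt'].
by rewrite -mulNr ler_pM2r // ltr_pM2r // ltW.
Qed.

End dyadic_level.

Section dyadic_step.
Context d (T : measurableType d) (R : realType) (P : probability T R) (X : T -> R).
Hypotheses (mX : measurable_fun setT X) (iX : P.-integrable setT (EFin \o X)).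
Variables (N : set T) (x0 : T) (n M : nat).
Hypotheses (mN : measurable N) (PN0 : P N = 0%E) (Nx0 : ~ N x0) (M_ge1 : (1 <= M)%N).
Hypothesis level_gt0 : forall x, ~ N x ->
  (0 < P [set y | dyadic_level X n y = dyadic_level X n x])%E.

Let level := dyadic_level X n.
Let C := [set y | level y = level x0].
Let e : R := 2 ^- n.

Hypothesis tail_small :
  (\int[P]_(y in [set y | (M%:R <= `|X y|)%R]) `|X y|%:E <= (e * fine (P C))%:E)%E.

(* The level of x0 is left out of s, so that the remainder block contains C and
   has positive probability. *)
Let s := [seq k <- int_range (M * 2 ^ n)%N |
  (0 < P [set y | level y = k])%E && (k != level x0)].
Let rest := [set y | level y \notin s].

Let e_ge0 : 0 <= e. Proof. by rewrite invr_ge0 exprn_ge0. Qed.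
Let e_le1 : e <= 1. Proof. by rewrite invf_le1 ?exprn_gt0 // exprn_ege1 // ler1n. Qed.
Let mlevel k : measurable [set y | level y = k]. Proof. exact: measurable_dyadic_level. Qed.
Let mC : measurable C := mlevel (level x0).
Let mrest : measurable rest. Proof. exact: measurable_level_notin. Qed.

Lemma level_x0_sub_rest : C `<=` rest.
Proof. by move=> y; rewrite /C /rest /= => ->; rewrite mem_filter eqxx andbF. Qed.

Lemma rest_gt0 : (0 < P rest)%E.
Proof.
apply: lt_le_trans (level_gt0 Nx0) _; apply: le_measure; rewrite ?inE //.
exact: level_x0_sub_rest.
Qed.

Lemma not_rest_level x : ~ N x -> `|X x| < M%:R -> level x != level x0 -> level x \in s.
Proof.
move=> Nx X_lt neq_x0; rewrite mem_filter level_gt0 // neq_x0.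
exact: dyadic_level_range.
Qed.

Lemma integral_rest_dist_le :
  (\int[P]_(y in rest) `|X y - X x0|%:E <= ((2 + `|X x0|) * e * fine (P C))%:E)%E.
Proof.
have mdist : measurable_fun setT (fun y => `|X y - X x0|%:E).
  apply/measurable_EFinP; apply: measurableT_comp => //.
  by apply: measurable_funB => //; exact: measurable_cst.
rewrite -(setDUK level_x0_sub_rest) ge0_integral_setU;
  [|exact: mC|exact: measurableD|exact: measurable_funS mdist|by []|];
  last by rewrite disj_set2E; apply/eqP/seteqP; split => y // [? []].
have intC : (\int[P]_(y in C) `|X y - X x0|%:E <= (e * fine (P C))%:E)%E.
  by apply: integral_dist_le => // y /esym; exact: dyadic_level_dist.
have intD : (\int[P]_(y in rest `\` C) `|X y - X x0|%:E <=
    ((1 + `|X x0|) * (e * fine (P C)))%:E)%E.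
  rewrite (ge0_negligible_integral _ _ _ _ PN0) //; first last.
  - exact: measurable_funS mdist.
  - exact: measurableD.
  apply: le_trans (integral_tail_dist_le mX (X x0) _ tail_small); last by rewrite ler1n.
  apply: ge0_subset_integral => //.
  - exact: measurableD (measurableD mrest (mlevel _)) mN.
  - exact: measurable_norm_ge.
  - exact: measurable_funS mdist.
  move=> y [[rest_y Cy] Ny] /=; rewrite leNgt; apply/negP => X_lt.
  by move: rest_y; rewrite /rest /= not_rest_level //; apply/eqP.
by apply: le_trans (leeD intC intD) _; rewrite -EFinD lee_fin; lra.
Qed.

Lemma average_rest_dist : `|average P rest X - X x0| <= (2 + `|X x0|) * e.
Proof.
apply: dist_average_le => //; first exact: rest_gt0.
apply: le_trans integral_rest_dist_le _; rewrite lee_fin ler_wpM2l ?mulr_ge0 ?addr_ge0 //.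
rewrite fine_le ?fin_num_measure //; apply: le_measure; rewrite ?inE //.
exact: level_x0_sub_rest.
Qed.

Let q := level_partition level s.

Lemma cond_exp_dyadic_mem x : level x \in s -> `|cond_exp_part P q X x - X x| <= e.
Proof.
move=> x_s; rewrite cond_exp_level_partition index_level_mem //.
apply: dist_average_le_of_bound => //.
  by move: x_s; rewrite mem_filter => /andP[/andP[]].
by move=> y /esym; exact: dyadic_level_dist.
Qed.

Lemma cond_exp_dyadic_notin x : level x \notin s ->
  `|cond_exp_part P q X x - X x0| <= (2 + `|X x0|) * e.
Proof.
by move=> x_s; rewrite cond_exp_level_partition index_level_notin //; exact: average_rest_dist.
Qed.

Lemma dyadic_step : exists q : fin_family, [/\ in_Pi P q,
  forall x, `|cond_exp_part P q X x| <= `|X x| + (2 * `|X x0| + 3) &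
  forall x, ~ N x -> `|X x| < M%:R ->
    `|cond_exp_part P q X x - X x| <= (2 * `|X x0| + 3) * e].
Proof.
have x0_ge0 : 0 <= `|X x0| by [].
have x0e_le : (2 + `|X x0|) * e <= 2 + `|X x0| by rewrite -[leRHS]mulr1 ler_wpM2l ?addr_ge0.
exists q; split.
- apply: level_partition_Pi => //; first exact: filter_uniq (int_range_uniq _).
    by move=> k; rewrite mem_filter => /andP[/andP[]].
  exact: rest_gt0.
- move=> x; have := ler_distD (X x) (cond_exp_part P q X x) 0.
  have := ler_distD (X x0) (cond_exp_part P q X x) 0; rewrite !subr0.
  have := normr_ge0 (X x).
  move: e_le1 e_ge0 x0e_le x0_ge0.
  by have [/cond_exp_dyadic_mem|/cond_exp_dyadic_notin] := boolP (level x \in s); lra.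
- move=> x Nx X_lt; have e_le : e <= (2 * `|X x0| + 3) * e by rewrite ler_peMl //; lra.
  have [/cond_exp_dyadic_mem|x_s] := boolP (level x \in s); first lra.
  have level_x : level x = level x0.
    by apply/eqP; apply: contraNT x_s; exact: not_rest_level.
  have := cond_exp_dyadic_notin x_s; have := dyadic_level_dist level_x; rewrite -/e.
  have := ler_distD (X x0) (cond_exp_part P q X x) (X x); rewrite [`|X x0 - X x|]distrC.
  by have := mulr_ge0 x0_ge0 e_ge0; lra.
Qed.

End dyadic_step.

Section dyadic_approximation.
Context d (T : measurableType d) (R : realType) (P : probability T R) (X : T -> R).
Hypotheses (mX : measurable_fun setT X) (iX : P.-integrable setT (EFin \o X)).

Lemma negligible_null_levels : P.-negligible
  [set x | exists n, P [set y | dyadic_level X n y = dyadic_level X n x] = 0%E].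
Proof.
pose null n k := if P [set y | dyadic_level X n y = k] == 0%E
  then [set y | dyadic_level X n y = k] else set0.
apply: (@negligibleS _ _ _ _ (\bigcup_n \bigcup_m (null n (Posz m) `|` null n (Negz m)))).
  move=> x [n /= Px0]; exists n; first by [].
  case lvl_x: (dyadic_level X n x) Px0 => [m|m] Px0; (exists m; first by []); [left|right];
    by rewrite /null Px0 eqxx.
apply: negligible_bigcup => n; apply: negligible_bigcup => m.
have null_negligible k : P.-negligible (null n k).
  rewrite /null; case: eqP => [Pk0|_]; last exact: negligible_set0.
  by apply/negligibleP => //; exact: measurable_dyadic_level.
exact: negligibleU.
Qed.

Lemma dyadic_cond_exp_approx : exists (c : R) (q : nat -> fin_family),
  [/\ 0 <= c, forall n, in_Pi P (q n),
      forall n x, `|cond_exp_part P (q n) X x| <= `|X x| + c &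
      {ae P, forall x n, `|X x| < n%:R ->
         `|cond_exp_part P (q n) X x - X x| <= c * 2 ^- n}].
Proof.
have [N [mN PN0 null_sub]] := negligible_null_levels.
have level_gt0 n x : ~ N x ->
    (0 < P [set y | dyadic_level X n y = dyadic_level X n x])%E.
  move=> Nx; rewrite lt0e measure_ge0 andbT; apply/negP => /eqP Px0.
  by apply: Nx; apply: null_sub; exists n.
have [x0 Nx0] := null_set_not_full PN0.
have step n : exists q : fin_family, [/\ in_Pi P q,
    forall x, `|cond_exp_part P q X x| <= `|X x| + (2 * `|X x0| + 3) &
    forall x, ~ N x -> `|X x| < n%:R ->
      `|cond_exp_part P q X x - X x| <= (2 * `|X x0| + 3) * 2 ^- n].
  have eps_gt0 : 0 < 2 ^- n * fine (P [set y | dyadic_level X n y = dyadic_level X n x0]).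
    by rewrite mulr_gt0 ?invr_gt0 ?exprn_gt0 // fine_probability_gt0 ?level_gt0 //;
      exact: measurable_dyadic_level.
  have [m0 tail_small] := integral_tail_small mX iX eps_gt0.
  pose M := maxn (maxn m0 n) 1.
  have M_ge1 : (1 <= M)%N by rewrite leq_max orbT.
  have m0_le : (m0 <= M)%N by rewrite !leq_max leqnn.
  have [q [qPi q_le q_close]] :=
    dyadic_step mX iX mN PN0 Nx0 M_ge1 (level_gt0 n) (tail_small M m0_le).
  exists q; split => // x Nx X_lt; apply: q_close => //.
  by rewrite (lt_le_trans X_lt) // ler_nat !leq_max leqnn orbT.
have [q Hq] := choice step.
exists (2 * `|X x0| + 3), q; split.
- by rewrite addr_ge0 ?mulr_ge0.
- by move=> n; have [] := Hq n.
- by move=> n x; have [] := Hq n.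
- exists N; split => // x /= x_far; apply: contrapT => Nx; apply: x_far => n.
  by have [_ _] := Hq n; apply.
Qed.

End dyadic_approximation.

Lemma cvg_dist_le_geometric (R : realType) (u : nat -> R) (l c : R) :
  (\forall n \near \oo, `|u n - l| <= c * 2 ^- n) -> u @ \oo --> l.
Proof.
move=> u_close; apply/cvgrPdist_le => eps eps_gt0.
have half_lt1 : `|2^-1 : R| < 1 by rewrite ger0_norm ?invr_ge0 // invf_lt1 ?ltr1n.
have /cvgrPdist_le/(_ eps eps_gt0) := cvg_geometric c half_lt1.
apply: filterS2 u_close => n u_n geo_n; rewrite distrC (le_trans u_n) //.
by move: geo_n; rewrite sub0r normrN /geometric /= exprVn => /(le_trans (ler_norm _)).
Qed.

Theorem proposition3p4 (d : measure_display) (T : measurableType d)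
  (R : realType) (P : probability T R) (Phi : R -> R) (X : T -> R) :
  nonatomic P -> orlicz_function Phi -> in_LPhi P Phi X ->
  exists q : nat -> fin_family,
    (forall n, in_Pi P (q n)) /\
    {ae P, forall x, cond_exp_part P (q n) X x @[n --> \oo] --> X x} /\
    exists Z : T -> R, in_LPhi P Phi Z /\
      {ae P, forall x, forall n, `|cond_exp_part P (q n) X x| <= Z x}.
Proof.
move=> _ oPhi LX; have [mX _] := LX.
have [c [q [c_ge0 qPi q_le q_close]]] :=
  dyadic_cond_exp_approx mX (in_LPhi_integrable oPhi LX).
exists q; split => //; split.
  apply: filterS q_close => x x_close; apply: cvg_dist_le_geometric; near=> n.
  by apply: x_close; near: n; exact: nbhs_infty_gtr.
exists (fun x => `|X x| + c); split; first exact: in_LPhi_normD_cst.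
by apply: aeW => x n; exact: q_le.
Unshelve. all: end_near.
Qed.
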